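(* Assume $b_1\ne b_2$, $c_1\ne c_2$. If $\check{f}$ has at least one root, then exactly one of the following is true. 1. $\check{f}$ has exactly two roots $x_0$ and $x_1$ at which it changes sign, and $\widehat{f}$ has no roots. The derivative $\check{f}'$ is nonzero at $x_0$ and $x_1$. 2. $\check{f}$ has exactly one root $x_0$ at which it does not change sign, and $\widehat{f}$ has no roots. The derivative $\check{f}'$ also has a root at $x_0$. 3. $\check{f}$ has exactly one root $x_0$ at which it changes sign, and $\widehat{f}$ also has exactly one root $x_1$ at which it changes sign. The derivatives $\check{f}'(x_0)$ and $\widehat{f}'(x_1)$ are nonzero.
   Context: A function $f:\mathbb{R}^+\to\mathbb{R}^+$ is called strongly hyperbolic if: (1) $\lim_{x\to 0+} f(x)=+\infty$ and $\lim_{x\to+\infty} f(x)=0$; (2) $f$ is strictly convex; (3) for each $b\in\mathbb{R}$, $\lim_{x\to+\infty} f(x+b)/f(x)=1$; (4) $f$ is differentiable; (5) $\ln|f'(x)|$ is strictly convex. Let $f_1,f_2$ be strongly hyperbolic functions, let $a_1,a_2>0$ and $b_1,b_2,c_1,c_2\in\mathbb{R}$. Define $\check{f}:(\max\{-b_1,-b_2\},+\infty)\to\mathbb{R}$, $\check{f}(x)=a_1f_1(x+b_1)+c_1-a_2f_1(x+b_2)-c_2$, and $\widehat{f}:(-\infty,\min\{-b_1,-b_2\})\to\mathbb{R}$, $\widehat{f}(x)=-a_1f_2(-x-b_1)+c_1+a_2f_2(-x-b_2)-c_2$. *)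

From Stdlib Require Import Reals Lra.
From Coquelicot Require Import Coquelicot.
Open Scope R_scope.

Definition strictly_convex_pos (g : R -> R) : Prop :=
  forall x y t, 0 < x -> 0 < y -> x <> y -> 0 < t < 1 ->
    g (t * x + (1 - t) * y) < t * g x + (1 - t) * g y.

(* f : R^+ -> R^+ is represented by f : R -> R; only values on (0,+oo) matter. *)
Definition strongly_hyperbolic (f : R -> R) : Prop :=
  (forall x, 0 < x -> 0 < f x) /\
  filterlim f (at_right 0) (Rbar_locally p_infty) /\
  is_lim f p_infty 0 /\
  strictly_convex_pos f /\
  (forall b : R, is_lim (fun x => f (x + b) / f x) p_infty 1) /\
  (forall x, 0 < x -> ex_derive f x) /\
  strictly_convex_pos (fun x => ln (Rabs (Derive f x))).

Definition fcheck (f1 : R -> R) (a1 a2 b1 b2 c1 c2 : R) (x : R) : R :=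
  a1 * f1 (x + b1) + c1 - a2 * f1 (x + b2) - c2.

Definition fhat (f2 : R -> R) (a1 a2 b1 b2 c1 c2 : R) (x : R) : R :=
  - a1 * f2 (- x - b1) + c1 + a2 * f2 (- x - b2) - c2.

Definition in_dcheck (b1 b2 x : R) : Prop := Rmax (- b1) (- b2) < x.
Definition in_dhat (b1 b2 x : R) : Prop := x < Rmin (- b1) (- b2).

Definition changes_sign_at (g : R -> R) (x0 : R) : Prop :=
  exists d, 0 < d /\ forall x y, x0 - d < x < x0 -> x0 < y < x0 + d ->
    g x * g y < 0.

Definition keeps_sign_at (g : R -> R) (x0 : R) : Prop :=
  exists d, 0 < d /\ forall x y, x0 - d < x < x0 -> x0 < y < x0 + d ->
    0 < g x * g y.

From Stdlib Require Import Reals Lra Psatz Classical FunctionalExtensionality.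
From Coquelicot Require Import Coquelicot.
Open Scope R_scope.

(* Write b2 < b1 (the other case follows by swapping the indices, which negates
   both functions).  Then fcheck = G - t and fhat(x) = H(-x) - t, where
   t = c2 - c1, G(x) = a1 f1(x + b1) - a2 f1(x + b2) on (-b2, +oo) and
   H(y) = a2 f2(y - b2) - a1 f2(y - b1) on (b1, +oo).  Each of G and H tends to
   -oo at the left end of its domain and to 0 at +oo, and, because ln|f'| is
   strictly convex, its derivative changes sign at most once, from + to -.  So
   each is either increasing (and negative) or rises to a single peak and then
   decreases to 0.  For t < 0 both level sets are single crossings.  For t > 0
   the level set of G is nonempty by assumption, so G has a peak; this forces
   a2 < a1, which makes H negative, and G = t has two crossings or touches the
   peak. *)

Lemma strictly_convex_pos_chord (g : R -> R) (a b c : R) :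
  strictly_convex_pos g -> 0 < a -> a < b -> b < c ->
  (c - a) * g b < (c - b) * g a + (b - a) * g c.
Proof.
  intros Hg Ha Hab Hbc.
  set (t := (c - b) / (c - a)).
  assert (Ht : 0 < t < 1).
  { unfold t; split; [apply Rdiv_lt_0_compat; lra|].
    apply (Rdiv_lt_1 (c - b) (c - a)); lra. }
  assert (Hb : t * a + (1 - t) * c = b) by (unfold t; field; lra).
  pose proof (Hg a c t Ha ltac:(lra) ltac:(lra) Ht) as H.
  rewrite Hb in H.
  assert (E1 : (c - a) * t = c - b) by (unfold t; field; lra).
  assert (E2 : (c - a) * (1 - t) = b - a) by (unfold t; field; lra).
  apply (Rmult_lt_compat_l (c - a)) in H; [|lra].
  rewrite Rmult_plus_distr_l, <- !Rmult_assoc, E1, E2 in H.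
  exact H.
Qed.

Lemma strictly_convex_pos_slope_lt (g : R -> R) (a b c : R) :
  strictly_convex_pos g -> 0 < a -> a < b -> b < c ->
  (g b - g a) / (b - a) < (g c - g a) / (c - a).
Proof.
  intros Hg Ha Hab Hbc.
  pose proof (strictly_convex_pos_chord g a b c Hg Ha Hab Hbc).
  apply (Rmult_lt_reg_r ((b - a) * (c - a))); [nra|].
  replace ((g b - g a) / (b - a) * ((b - a) * (c - a)))
    with ((g b - g a) * (c - a)) by (field; lra).
  replace ((g c - g a) / (c - a) * ((b - a) * (c - a)))
    with ((g c - g a) * (b - a)) by (field; lra).
  nra.
Qed.

Lemma strictly_convex_pos_increment_lt (g : R -> R) (u L m : R) :
  strictly_convex_pos g -> 0 < u -> 0 < L -> 0 < m ->
  g (u + L) - g u < g (u + m + L) - g (u + m).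
Proof.
  intros Hg Hu HL Hm.
  pose proof (strictly_convex_pos_chord g u (u + L) (u + m + L) Hg Hu
                ltac:(lra) ltac:(lra)).
  pose proof (strictly_convex_pos_chord g u (u + m) (u + m + L) Hg Hu
                ltac:(lra) ltac:(lra)).
  apply (Rmult_lt_reg_l (m + L)); [lra|].
  nra.
Qed.

Lemma strictly_convex_pos_Derive_le_slope (g : R -> R) (x y : R) :
  strictly_convex_pos g -> 0 < x -> x < y -> ex_derive g x ->
  Derive g x <= (g y - g x) / (y - x).
Proof.
  intros Hg Hx Hxy Hd.
  apply Rnot_lt_le; intros Hlt.
  pose proof (Derive_correct g x Hd) as Hlim.
  apply is_derive_Reals in Hlim.
  destruct (Hlim (Derive g x - (g y - g x) / (y - x)) ltac:(lra)) as [del Hdel].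
  pose proof (Rmin_l del (y - x)); pose proof (Rmin_r del (y - x)).
  pose proof (Rmin_pos del (y - x) (cond_pos del) ltac:(lra)).
  set (h := Rmin del (y - x) / 2).
  specialize (Hdel h ltac:(unfold h; lra) ltac:(rewrite Rabs_right; unfold h; lra)).
  apply Rabs_lt_between' in Hdel.
  pose proof (strictly_convex_pos_slope_lt g x (x + h) y Hg Hx
                ltac:(unfold h; lra) ltac:(unfold h; lra)) as Hslope.
  replace (x + h - x) with h in Hslope by ring.
  lra.
Qed.

Lemma strictly_convex_pos_decreasing (g : R -> R) :
  strictly_convex_pos g -> (forall x, 0 < x -> 0 < g x) -> is_lim g p_infty 0 ->
  forall x y, 0 < x -> x < y -> g y < g x.
Proof.
  intros Hg Hpos Hlim x y Hx Hxy.
  apply Rnot_le_lt; intros Hle.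
  apply is_lim_spec in Hlim.
  destruct (Hlim (mkposreal (g y) (Hpos y ltac:(lra)))) as [N HN].
  pose proof (Rmax_l N y); pose proof (Rmax_r N y).
  set (z := Rmax N y + 1).
  specialize (HN z ltac:(unfold z; lra)); simpl in HN.
  apply Rabs_lt_between' in HN.
  pose proof (strictly_convex_pos_chord g x y z Hg Hx Hxy ltac:(unfold z; lra)).
  assert (0 <= (z - y) * (g y - g x)) by (apply Rmult_le_pos; unfold z; lra).
  assert (0 < (y - x) * (g y - g z)) by (apply Rmult_lt_0_compat; lra).
  nra.
Qed.

Definition no_root (F : R -> R) (D : R -> Prop) : Prop :=
  forall x, D x -> F x <> 0.

Definition unique_crossing_root (F : R -> R) (D : R -> Prop) : Prop :=
  exists x0, D x0 /\ F x0 = 0 /\ (forall x, D x -> F x = 0 -> x = x0) /\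
    changes_sign_at F x0 /\ Derive F x0 <> 0.

Definition two_crossing_roots (F : R -> R) (D : R -> Prop) : Prop :=
  exists x0 x1, x0 <> x1 /\
    D x0 /\ F x0 = 0 /\ D x1 /\ F x1 = 0 /\
    (forall x, D x -> F x = 0 -> x = x0 \/ x = x1) /\
    changes_sign_at F x0 /\ changes_sign_at F x1 /\
    Derive F x0 <> 0 /\ Derive F x1 <> 0.

Definition unique_touching_root (F : R -> R) (D : R -> Prop) : Prop :=
  exists x0, D x0 /\ F x0 = 0 /\ (forall x, D x -> F x = 0 -> x = x0) /\
    keeps_sign_at F x0 /\ Derive F x0 = 0.

Definition root_pattern (Fc : R -> R) (Dc : R -> Prop) (Fh : R -> R) (Dh : R -> Prop) : Prop :=
  (two_crossing_roots Fc Dc /\ no_root Fh Dh) \/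
  (unique_touching_root Fc Dc /\ no_root Fh Dh) \/
  (unique_crossing_root Fc Dc /\ unique_crossing_root Fh Dh).

Lemma changes_sign_at_rising (F : R -> R) (x0 d : R) : 0 < d ->
  (forall x, x0 - d < x < x0 -> F x < 0) -> (forall y, x0 < y < x0 + d -> 0 < F y) ->
  changes_sign_at F x0.
Proof.
  intros Hd Hl Hr; exists d; split; [exact Hd|].
  intros x y Hx Hy; pose proof (Hl x Hx); pose proof (Hr y Hy); nra.
Qed.

Lemma changes_sign_at_falling (F : R -> R) (x0 d : R) : 0 < d ->
  (forall x, x0 - d < x < x0 -> 0 < F x) -> (forall y, x0 < y < x0 + d -> F y < 0) ->
  changes_sign_at F x0.
Proof.
  intros Hd Hl Hr; exists d; split; [exact Hd|].
  intros x y Hx Hy; pose proof (Hl x Hx); pose proof (Hr y Hy); nra.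
Qed.

Lemma keeps_sign_at_negative (F : R -> R) (x0 d : R) : 0 < d ->
  (forall x, x0 - d < x < x0 + d -> x <> x0 -> F x < 0) -> keeps_sign_at F x0.
Proof.
  intros Hd Hneg; exists d; split; [exact Hd|].
  intros x y Hx Hy.
  pose proof (Hneg x ltac:(lra) ltac:(lra)); pose proof (Hneg y ltac:(lra) ltac:(lra)).
  nra.
Qed.

Section LevelSets.

Variables (g dg : R -> R) (l : R).
Hypothesis g_derive : forall x, l < x -> is_derive g x (dg x).
Hypothesis g_unbounded_below : forall M y, l < y -> exists x, l < x < y /\ g x < M.
Hypothesis g_vanishes_at_infinity :
  forall eps, 0 < eps -> exists N, forall x, N < x -> Rabs (g x) < eps.
Hypothesis dg_single_crossing : forall x0 x, l < x0 -> x0 < x -> dg x0 <= 0 -> dg x < 0.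

Lemma level_derive (t x : R) : l < x -> is_derive (fun y => g y - t) x (dg x).
Proof.
  intros Hx.
  replace (dg x) with (dg x - 0) by ring.
  exact (is_derive_minus g (fun _ => t) x (dg x) 0 (g_derive x Hx) (is_derive_const t x)).
Qed.

Lemma level_Derive (t x : R) : l < x -> Derive (fun y => g y - t) x = dg x.
Proof. intros Hx; apply is_derive_unique, level_derive, Hx. Qed.

Lemma g_ivt (a b t : R) : l < a -> a < b -> (g a - t) * (g b - t) < 0 ->
  exists z, a < z < b /\ g z = t.
Proof.
  intros Ha Hab Hsign.
  assert (Hs : exists s, s <> 0 /\ s * (g a - t) < 0 < s * (g b - t)).
  { destruct (Rmult_neg_cases _ _ Hsign) as [[? ?] | [? ?]];
      [exists (-1) | exists 1]; repeat split; lra. }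
  destruct Hs as [s [Hs [Hsa Hsb]]].
  destruct (Ranalysis5.IVT_interv (fun x => s * (g x - t)) a b) as [z [Hz Ez]];
    [| exact Hab | exact Hsa | exact Hsb |].
  - intros c Hc.
    apply continuity_pt_filterlim, (ex_derive_continuous (fun x => s * (g x - t))).
    exists (s * dg c); apply (is_derive_scal (fun x => g x - t)), level_derive; lra.
  - exists z; split; [|nra].
    split; apply Rnot_le_lt; intros Hle;
      [replace z with a in Ez by lra | replace z with b in Ez by lra]; nra.
Qed.

Lemma g_increasing_upto (m : R) : (forall x, l < x < m -> 0 < dg x) ->
  forall x y, l < x -> x < y -> y <= m -> g x < g y.
Proof.
  intros Hpos x y Hx Hxy Hym.
  destruct (MVT_cor2 g dg x y Hxy) as [c [E Hc]].
  { intros c Hc; apply is_derive_Reals, g_derive; lra. }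
  pose proof (Hpos c ltac:(lra)); nra.
Qed.

Lemma g_decreasing_from (m : R) : l < m -> (forall x, m < x -> dg x < 0) ->
  forall x y, m <= x -> x < y -> g y < g x.
Proof.
  intros Hm Hneg x y Hx Hxy.
  destruct (MVT_cor2 g dg x y Hxy) as [c [E Hc]].
  { intros c Hc; apply is_derive_Reals, g_derive; lra. }
  pose proof (Hneg c ltac:(lra)); nra.
Qed.

Lemma g_small_beyond (eps y : R) : 0 < eps ->
  exists z, y < z /\ Rabs (g z) < eps.
Proof.
  intros He; destruct (g_vanishes_at_infinity eps He) as [N HN].
  exists (Rmax N y + 1); pose proof (Rmax_l N y); pose proof (Rmax_r N y).
  split; [lra | apply HN; lra].
Qed.

Lemma level_changes_sign_rising (m t z : R) : (forall x, l < x < m -> 0 < dg x) ->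
  l < z < m -> g z = t -> changes_sign_at (fun x => g x - t) z.
Proof.
  intros Hpos Hz Ez.
  pose proof (g_increasing_upto m Hpos) as Hinc.
  pose proof (Rmin_l (z - l) (m - z)); pose proof (Rmin_r (z - l) (m - z)).
  apply (changes_sign_at_rising _ z (Rmin (z - l) (m - z)));
    [apply Rmin_pos; lra | intros x Hx | intros y Hy].
  - pose proof (Hinc x z ltac:(lra) ltac:(lra) ltac:(lra)); lra.
  - pose proof (Hinc z y ltac:(lra) ltac:(lra) ltac:(lra)); lra.
Qed.

Lemma level_changes_sign_falling (m t z : R) : l < m -> (forall x, m < x -> dg x < 0) ->
  m < z -> g z = t -> changes_sign_at (fun x => g x - t) z.
Proof.
  intros Hm Hneg Hz Ez.
  pose proof (g_decreasing_from m Hm Hneg) as Hdec.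
  apply (changes_sign_at_falling _ z (z - m)); [lra | intros x Hx | intros y Hy].
  - pose proof (Hdec x z ltac:(lra) ltac:(lra)); lra.
  - pose proof (Hdec z y ltac:(lra) ltac:(lra)); lra.
Qed.

(* Once dg is <= 0, g decreases for good; as it tends to 0, it stays positive. *)
Lemma g_pos_after (x1 : R) : l < x1 -> dg x1 <= 0 -> forall x, x1 < x -> 0 < g x.
Proof.
  intros Hx1 Hd x Hx.
  assert (Hdec := g_decreasing_from x1 Hx1
                    (fun y Hy => dg_single_crossing x1 y Hx1 Hy Hd)).
  apply Rnot_le_lt; intros Hle.
  pose proof (Hdec x (x + 1) ltac:(lra) ltac:(lra)).
  destruct (g_small_beyond (- g (x + 1)) (x + 1) ltac:(lra)) as [z [Hz Hgz]].
  apply Rabs_lt_between in Hgz.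
  pose proof (Hdec (x + 1) z ltac:(lra) Hz); lra.
Qed.

Lemma g_critical_point (x0 : R) : l < x0 -> 0 < g x0 ->
  exists xs, l < xs /\ g x0 <= g xs /\ dg xs = 0.
Proof.
  intros Hx0 Hg0.
  destruct (g_unbounded_below (g x0) x0 Hx0) as [a [Ha Hga]].
  destruct (g_small_beyond (g x0) x0 Hg0) as [b [Hb Hgb]].
  apply Rabs_lt_between in Hgb.
  destruct (continuity_ab_maj g a b ltac:(lra)) as [xs [Hmax Hxs]].
  { intros c Hc; apply continuity_pt_filterlim, (ex_derive_continuous g).
    exists (dg c); apply g_derive; lra. }
  pose proof (Hmax x0 ltac:(lra)).
  assert (Hint : a < xs < b).
  { split; apply Rnot_le_lt; intros Hle;
      [replace xs with a in * by lra | replace xs with b in * by lra]; lra. }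
  exists xs; repeat split; [lra | lra |].
  assert (Hd : derivable_pt g xs)
    by (apply ex_derive_Reals_0; exists (dg xs); apply g_derive; lra).
  rewrite <- (deriv_maximum g a b xs Hd (proj1 Hint) (proj2 Hint)
                (fun x H1 H2 => Hmax x ltac:(lra))).
  rewrite Derive_Reals; symmetry; apply is_derive_unique, g_derive; lra.
Qed.

Section Peak.

Variable xs : R.
Hypotheses (Hxs : l < xs) (dg_xs : dg xs = 0).

Lemma dg_pos_before_peak (x : R) : l < x < xs -> 0 < dg x.
Proof.
  intros Hx; apply Rnot_le_lt; intros Hle.
  pose proof (dg_single_crossing x xs (proj1 Hx) (proj2 Hx) Hle); lra.
Qed.

Lemma dg_neg_after_peak (x : R) : xs < x -> dg x < 0.
Proof. intros Hx; apply (dg_single_crossing xs x); lra. Qed.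

Lemma g_lt_peak (x : R) : l < x -> x <> xs -> g x < g xs.
Proof.
  intros Hx Hne; destruct (Rtotal_order x xs) as [Hlt | [Heq | Hgt]]; [| contradiction |].
  - exact (g_increasing_upto xs dg_pos_before_peak x xs Hx Hlt (Rle_refl xs)).
  - exact (g_decreasing_from xs Hxs dg_neg_after_peak xs x (Rle_refl xs) Hgt).
Qed.

Lemma two_crossing_roots_below_peak (t : R) : 0 < t -> t < g xs ->
  two_crossing_roots (fun x => g x - t) (fun x => l < x).
Proof.
  intros Ht Htxs.
  pose proof (g_increasing_upto xs dg_pos_before_peak) as Hinc.
  pose proof (g_decreasing_from xs Hxs dg_neg_after_peak) as Hdec.
  destruct (g_unbounded_below t xs Hxs) as [a [Ha Hga]].
  destruct (g_ivt a xs t (proj1 Ha) (proj2 Ha) ltac:(nra)) as [z0 [Hz0 E0]].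
  destruct (g_small_beyond t xs Ht) as [b [Hb Hgb]].
  apply Rabs_lt_between in Hgb.
  destruct (g_ivt xs b t Hxs Hb ltac:(nra)) as [z1 [Hz1 E1]].
  exists z0, z1; repeat split; try lra.
  - intros x Hx Hroot.
    destruct (Rle_or_lt x xs) as [Hle | Hlt]; [left | right].
    + destruct (Rtotal_order x z0) as [? | [? | ?]]; [exfalso | assumption | exfalso].
      * pose proof (Hinc x z0 Hx ltac:(lra) ltac:(lra)); lra.
      * pose proof (Hinc z0 x ltac:(lra) ltac:(lra) Hle); lra.
    + destruct (Rtotal_order x z1) as [? | [? | ?]]; [exfalso | assumption | exfalso].
      * pose proof (Hdec x z1 ltac:(lra) ltac:(lra)); lra.
      * pose proof (Hdec z1 x ltac:(lra) ltac:(lra)); lra.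
  - exact (level_changes_sign_rising xs t z0 dg_pos_before_peak ltac:(lra) E0).
  - exact (level_changes_sign_falling xs t z1 Hxs dg_neg_after_peak ltac:(lra) E1).
  - rewrite level_Derive by lra; pose proof (dg_pos_before_peak z0 ltac:(lra)); lra.
  - rewrite level_Derive by lra; pose proof (dg_neg_after_peak z1 ltac:(lra)); lra.
Qed.

Lemma unique_touching_root_at_peak :
  unique_touching_root (fun x => g x - g xs) (fun x => l < x).
Proof.
  exists xs; repeat split; [exact Hxs | ring | | | ].
  - intros x Hx Hroot; destruct (Req_dec x xs) as [| Hne]; [assumption|].
    pose proof (g_lt_peak x Hx Hne); lra.
  - apply (keeps_sign_at_negative _ xs (xs - l)); [lra|].
    intros x Hx Hne; pose proof (g_lt_peak x ltac:(lra) Hne); lra.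
  - rewrite level_Derive by exact Hxs; exact dg_xs.
Qed.

End Peak.

Lemma unique_crossing_root_rising (m t : R) : l < m -> t < g m ->
  (forall x, l < x < m -> 0 < dg x) -> (forall x, m < x -> t < g x) ->
  unique_crossing_root (fun x => g x - t) (fun x => l < x).
Proof.
  intros Hm Htm Hpos Habove.
  pose proof (g_increasing_upto m Hpos) as Hinc.
  destruct (g_unbounded_below t m Hm) as [a [Ha Hga]].
  destruct (g_ivt a m t (proj1 Ha) (proj2 Ha) ltac:(nra)) as [z [Hz Ez]].
  exists z; repeat split; try lra.
  - intros x Hx Hroot.
    destruct (Rle_or_lt x m) as [Hle | Hlt]; [| pose proof (Habove x Hlt); lra].
    destruct (Rtotal_order x z) as [? | [? | ?]]; [exfalso | assumption | exfalso].
    + pose proof (Hinc x z Hx ltac:(lra) ltac:(lra)); lra.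
    + pose proof (Hinc z x ltac:(lra) ltac:(lra) Hle); lra.
  - exact (level_changes_sign_rising m t z Hpos ltac:(lra) Ez).
  - rewrite level_Derive by lra; pose proof (Hpos z ltac:(lra)); lra.
Qed.

Lemma unique_crossing_root_below_zero (t : R) : t < 0 ->
  unique_crossing_root (fun x => g x - t) (fun x => l < x).
Proof.
  intros Ht.
  destruct (classic (exists x1, l < x1 /\ dg x1 <= 0)) as [[x1 [Hx1 Hd1]] | Hnone].
  - pose proof (g_pos_after x1 Hx1 Hd1 (x1 + 1) ltac:(lra)) as Hpos1.
    destruct (g_critical_point (x1 + 1) ltac:(lra) Hpos1) as [xs [Hxs [Hge Hdxs]]].
    apply (unique_crossing_root_rising xs); [exact Hxs | lra | |].
    + exact (dg_pos_before_peak xs Hdxs).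
    + intros x Hx; pose proof (g_pos_after xs Hxs (Req_le _ _ Hdxs) x Hx); lra.
  - assert (Hpos : forall x, l < x -> 0 < dg x).
    { intros x Hx; apply Rnot_le_lt; intros Hle; apply Hnone; exists x; auto. }
    destruct (g_small_beyond (- t) l ltac:(lra)) as [m [Hm Hgm]].
    apply Rabs_lt_between in Hgm.
    apply (unique_crossing_root_rising m); [exact Hm | lra | intros x Hx; apply Hpos; lra |].
    intros x Hx.
    pose proof (g_increasing_upto x (fun y Hy => Hpos y (proj1 Hy)) m x Hm Hx (Rle_refl x)).
    lra.
Qed.

Lemma two_or_touching_root_above_zero (t : R) : 0 < t ->
  (exists x, l < x /\ g x = t) ->
  two_crossing_roots (fun x => g x - t) (fun x => l < x) \/
  unique_touching_root (fun x => g x - t) (fun x => l < x).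
Proof.
  intros Ht [x0 [Hx0 Hgx0]].
  destruct (g_critical_point x0 Hx0 ltac:(lra)) as [xs [Hxs [Hge Hdxs]]].
  destruct (Rle_lt_or_eq_dec t (g xs) ltac:(lra)) as [Hlt | Heq].
  - left; exact (two_crossing_roots_below_peak xs Hxs Hdxs t Ht Hlt).
  - right; rewrite Heq; exact (unique_touching_root_at_peak xs Hxs Hdxs).
Qed.

End LevelSets.

Definition shift_diff (f : R -> R) (A B p q x : R) : R := A * f (x + p) - B * f (x + q).

Definition shift_diff' (f : R -> R) (A B p q x : R) : R :=
  A * Derive f (x + p) - B * Derive f (x + q).

Section StronglyHyperbolic.

Variable f : R -> R.
Hypothesis Hf : strongly_hyperbolic f.

Lemma sh_decreasing (x y : R) : 0 < x -> x < y -> f y < f x.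
Proof.
  destruct Hf as (Hpos & _ & Hlim & Hconv & _).
  exact (strictly_convex_pos_decreasing f Hconv Hpos Hlim x y).
Qed.

Lemma sh_Derive_neg (x : R) : 0 < x -> Derive f x < 0.
Proof.
  intros Hx; destruct Hf as (_ & _ & _ & Hconv & _ & Hder & _).
  pose proof (strictly_convex_pos_Derive_le_slope f x (x + 1) Hconv Hx
                ltac:(lra) (Hder x Hx)) as Hslope.
  replace (x + 1 - x) with 1 in Hslope by ring.
  pose proof (sh_decreasing x (x + 1) Hx ltac:(lra)).
  rewrite Rdiv_1_r in Hslope; lra.
Qed.

Lemma sh_small_at_infinity (eps : R) : 0 < eps -> exists N, forall x, N < x -> f x < eps.
Proof.
  intros Heps; destruct Hf as (_ & _ & Hlim & _).
  apply is_lim_spec in Hlim; destruct (Hlim (mkposreal eps Heps)) as [N HN].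
  exists N; intros x Hx; specialize (HN x Hx); simpl in HN.
  apply Rabs_lt_between' in HN; lra.
Qed.

Lemma sh_large_near_0 (M : R) : exists d, 0 < d /\ forall x, 0 < x < d -> M < f x.
Proof.
  destruct Hf as (_ & Hlim & _).
  destruct (Hlim (fun y => M < y) ltac:(now exists M)) as [d Hd].
  exists d; split; [apply cond_pos|]; intros x Hx; apply Hd; [|lra].
  unfold ball; simpl; unfold AbsRing_ball, abs, minus, plus, opp; simpl.
  rewrite Rabs_right; lra.
Qed.

Section ShiftDiff.

Variables A B p q : R.
Hypotheses (HA : 0 < A) (HB : 0 < B) (Hqp : q < p).

Local Notation G := (shift_diff f A B p q).
Local Notation G' := (shift_diff' f A B p q).

Lemma shift_diff_derive (x : R) : - q < x -> is_derive G x (G' x).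
Proof.
  intros Hx; destruct Hf as (_ & _ & _ & _ & _ & Hder & _).
  unfold shift_diff, shift_diff'; auto_derive.
  - split; [apply Hder; lra | split; [apply Hder; lra | exact I]].
  - rewrite !Rmult_1_l; reflexivity.
Qed.

Lemma shift_diff_unbounded_below (M y : R) : - q < y -> exists x, - q < x < y /\ G x < M.
Proof.
  intros Hy.
  destruct (sh_large_near_0 ((A * f (p - q) - M) / B)) as [d [Hd Hlarge]].
  pose proof (Rmin_l d (y + q)); pose proof (Rmin_r d (y + q)).
  pose proof (Rmin_pos d (y + q) Hd ltac:(lra)).
  set (x := - q + Rmin d (y + q) / 2).
  exists x; split; [unfold x; lra|].
  pose proof (Hlarge (x + q) ltac:(unfold x; lra)).
  pose proof (sh_decreasing (p - q) (x + p) ltac:(lra) ltac:(unfold x; lra)).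
  assert (B * ((A * f (p - q) - M) / B) = A * f (p - q) - M) by (field; lra).
  unfold shift_diff; nra.
Qed.

Lemma shift_diff_vanishes_at_infinity (eps : R) : 0 < eps ->
  exists N, forall x, N < x -> Rabs (G x) < eps.
Proof.
  intros Heps; destruct Hf as (Hpos & _).
  set (e := eps / (A + B)).
  assert (He : A * e + B * e = eps) by (unfold e; field; lra).
  destruct (sh_small_at_infinity e ltac:(unfold e; apply Rdiv_lt_0_compat; lra)) as [N HN].
  exists (Rmax N 0 - q); intros x Hx.
  pose proof (Rmax_l N 0); pose proof (Rmax_r N 0).
  pose proof (HN (x + p) ltac:(lra)); pose proof (HN (x + q) ltac:(lra)).
  pose proof (Hpos (x + p) ltac:(lra)); pose proof (Hpos (x + q) ltac:(lra)).
  unfold shift_diff; apply Rabs_def1; nra.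
Qed.

(* G' x <= 0 means ln (B |f'(x + q)|) <= ln (A |f'(x + p)|), and the difference
   ln |f'(x + p)| - ln |f'(x + q)| is strictly increasing in x. *)
Lemma shift_diff'_single_crossing (x0 x : R) : - q < x0 -> x0 < x -> G' x0 <= 0 -> G' x < 0.
Proof.
  intros Hx0 Hx HG'.
  destruct Hf as (_ & _ & _ & _ & _ & _ & Hlnconv).
  set (h := fun y => ln (Rabs (Derive f y))).
  assert (Hinc : h (x0 + p) - h (x0 + q) < h (x + p) - h (x + q)).
  { pose proof (strictly_convex_pos_increment_lt h (x0 + q) (p - q) (x - x0) Hlnconv
                  ltac:(lra) ltac:(lra) ltac:(lra)) as K.
    replace (x0 + q + (p - q)) with (x0 + p) in K by ring.
    replace (x0 + q + (x - x0) + (p - q)) with (x + p) in K by ring.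
    replace (x0 + q + (x - x0)) with (x + q) in K by ring.
    exact K. }
  assert (Hln : forall y, - q < y ->
            ln (A * - Derive f (y + p)) - ln (B * - Derive f (y + q))
            = ln A - ln B + (h (y + p) - h (y + q))).
  { intros y Hy.
    pose proof (sh_Derive_neg (y + p) ltac:(lra)).
    pose proof (sh_Derive_neg (y + q) ltac:(lra)).
    rewrite !ln_mult by lra; unfold h; rewrite !Rabs_left by lra; ring. }
  pose proof (Hln x0 Hx0); pose proof (Hln x ltac:(lra)).
  pose proof (sh_Derive_neg (x0 + p) ltac:(lra)); pose proof (sh_Derive_neg (x0 + q) ltac:(lra)).
  pose proof (sh_Derive_neg (x + p) ltac:(lra)); pose proof (sh_Derive_neg (x + q) ltac:(lra)).
  unfold shift_diff' in *.
  assert (Hle : ln (B * - Derive f (x0 + q)) <= ln (A * - Derive f (x0 + p)))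
    by (apply ln_le; nra).
  assert (Hlt : ln (B * - Derive f (x + q)) < ln (A * - Derive f (x + p))) by lra.
  apply ln_lt_inv in Hlt; nra.
Qed.

Lemma shift_diff_neg (x : R) : A <= B -> - q < x -> G x < 0.
Proof.
  intros HAB Hx; destruct Hf as (Hpos & _).
  pose proof (sh_decreasing (x + q) (x + p) ltac:(lra) ltac:(lra)).
  pose proof (Hpos (x + p) ltac:(lra)).
  unfold shift_diff; nra.
Qed.

Lemma shift_diff_level_below_zero (t : R) : t < 0 ->
  unique_crossing_root (fun x => G x - t) (fun x => - q < x).
Proof.
  exact (unique_crossing_root_below_zero G G' (- q) shift_diff_derive
           shift_diff_unbounded_below shift_diff_vanishes_at_infinity
           shift_diff'_single_crossing t).
Qed.

Lemma shift_diff_level_above_zero (t : R) : 0 < t -> (exists x, - q < x /\ G x = t) ->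
  two_crossing_roots (fun x => G x - t) (fun x => - q < x) \/
  unique_touching_root (fun x => G x - t) (fun x => - q < x).
Proof.
  exact (two_or_touching_root_above_zero G G' (- q) shift_diff_derive
           shift_diff_unbounded_below shift_diff_vanishes_at_infinity
           shift_diff'_single_crossing t).
Qed.

Lemma shift_diff_level_ex_derive (t x : R) : - q < x -> ex_derive (fun y => G y - t) x.
Proof. intros Hx; exists (G' x); exact (level_derive G G' (- q) shift_diff_derive t x Hx). Qed.

End ShiftDiff.

End StronglyHyperbolic.

Lemma changes_sign_at_opp (F : R -> R) (x0 : R) :
  changes_sign_at F x0 -> changes_sign_at (fun x => - F x) x0.
Proof.
  intros [d [Hd K]]; exists d; split; [exact Hd|].
  intros x y Hx Hy; specialize (K x y Hx Hy); nra.
Qed.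

Lemma keeps_sign_at_opp (F : R -> R) (x0 : R) :
  keeps_sign_at F x0 -> keeps_sign_at (fun x => - F x) x0.
Proof.
  intros [d [Hd K]]; exists d; split; [exact Hd|].
  intros x y Hx Hy; specialize (K x y Hx Hy); nra.
Qed.

Lemma no_root_opp (F : R -> R) (D : R -> Prop) : no_root F D -> no_root (fun x => - F x) D.
Proof. intros K x Hx; specialize (K x Hx); lra. Qed.

Lemma unique_crossing_root_opp (F : R -> R) (D : R -> Prop) :
  unique_crossing_root F D -> unique_crossing_root (fun x => - F x) D.
Proof.
  intros (x0 & Hx0 & Hroot & Huniq & Hcs & Hd); exists x0.
  rewrite Derive_opp; repeat split; auto; try lra.
  - intros x Hx Hfx; apply Huniq; auto; lra.
  - apply changes_sign_at_opp, Hcs.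
Qed.

Lemma two_crossing_roots_opp (F : R -> R) (D : R -> Prop) :
  two_crossing_roots F D -> two_crossing_roots (fun x => - F x) D.
Proof.
  intros (x0 & x1 & Hne & Hx0 & Hr0 & Hx1 & Hr1 & Huniq & Hcs0 & Hcs1 & Hd0 & Hd1).
  exists x0, x1; rewrite !Derive_opp; repeat split; auto; try lra.
  - intros x Hx Hfx; apply Huniq; auto; lra.
  - apply changes_sign_at_opp, Hcs0.
  - apply changes_sign_at_opp, Hcs1.
Qed.

Lemma unique_touching_root_opp (F : R -> R) (D : R -> Prop) :
  unique_touching_root F D -> unique_touching_root (fun x => - F x) D.
Proof.
  intros (x0 & Hx0 & Hroot & Huniq & Hks & Hd); exists x0.
  rewrite Derive_opp; repeat split; auto; try lra.
  - intros x Hx Hfx; apply Huniq; auto; lra.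
  - apply keeps_sign_at_opp, Hks.
Qed.

Lemma root_pattern_opp (Fc : R -> R) (Dc : R -> Prop) (Fh : R -> R) (Dh : R -> Prop) :
  root_pattern Fc Dc Fh Dh ->
  root_pattern (fun x => - Fc x) Dc (fun x => - Fh x) Dh.
Proof.
  intros [[H1 H2] | [[H1 H2] | [H1 H2]]]; [left | right; left | right; right];
    split; auto using no_root_opp, two_crossing_roots_opp, unique_touching_root_opp,
      unique_crossing_root_opp.
Qed.

Lemma changes_sign_at_reflect (F : R -> R) (x0 : R) :
  changes_sign_at F (- x0) -> changes_sign_at (fun x => F (- x)) x0.
Proof.
  intros [d [Hd K]]; exists d; split; [exact Hd|].
  intros x y Hx Hy; specialize (K (- y) (- x) ltac:(lra) ltac:(lra)); nra.
Qed.

Lemma Derive_reflect (F : R -> R) (x : R) :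
  ex_derive F (- x) -> Derive (fun y => F (- y)) x = - Derive F (- x).
Proof.
  intros HF; apply is_derive_unique; auto_derive; [exact HF | change (fun y => F y) with F; ring].
Qed.

Lemma no_root_reflect (F : R -> R) (D E : R -> Prop) :
  (forall x, E x -> D (- x)) -> no_root F D -> no_root (fun x => F (- x)) E.
Proof. intros HED K x Hx; exact (K (- x) (HED x Hx)). Qed.

Lemma unique_crossing_root_reflect (F : R -> R) (D E : R -> Prop) :
  (forall x, E x <-> D (- x)) -> (forall x, D x -> ex_derive F x) ->
  unique_crossing_root F D -> unique_crossing_root (fun x => F (- x)) E.
Proof.
  intros HED Hder (x0 & Hx0 & Hroot & Huniq & Hcs & Hd); exists (- x0).
  rewrite Ropp_involutive in *.
  rewrite Derive_reflect, Ropp_involutive by (rewrite Ropp_involutive; auto).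
  repeat split; auto; try lra.
  - apply HED; rewrite Ropp_involutive; exact Hx0.
  - intros x Hx Hfx; rewrite <- (Huniq (- x) (proj1 (HED x) Hx) Hfx); ring.
  - apply changes_sign_at_reflect; rewrite Ropp_involutive; exact Hcs.
Qed.

Lemma fcheck_shift_diff (f : R -> R) (a1 a2 b1 b2 c1 c2 : R) :
  fcheck f a1 a2 b1 b2 c1 c2 = fun x => shift_diff f a1 a2 b1 b2 x - (c2 - c1).
Proof. apply functional_extensionality; intros x; unfold fcheck, shift_diff; ring. Qed.

Lemma fhat_shift_diff (f : R -> R) (a1 a2 b1 b2 c1 c2 : R) :
  fhat f a1 a2 b1 b2 c1 c2 = fun x => shift_diff f a2 a1 (- b2) (- b1) (- x) - (c2 - c1).
Proof.
  apply functional_extensionality; intros x; unfold fhat, shift_diff, Rminus; ring.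
Qed.

Lemma fcheck_swap (f : R -> R) (a1 a2 b1 b2 c1 c2 : R) :
  fcheck f a1 a2 b1 b2 c1 c2 = fun x => - fcheck f a2 a1 b2 b1 c2 c1 x.
Proof. apply functional_extensionality; intros x; unfold fcheck; ring. Qed.

Lemma fhat_swap (f : R -> R) (a1 a2 b1 b2 c1 c2 : R) :
  fhat f a1 a2 b1 b2 c1 c2 = fun x => - fhat f a2 a1 b2 b1 c2 c1 x.
Proof. apply functional_extensionality; intros x; unfold fhat; ring. Qed.

Lemma in_dcheck_comm (b1 b2 : R) : in_dcheck b1 b2 = in_dcheck b2 b1.
Proof. unfold in_dcheck; rewrite Rmax_comm; reflexivity. Qed.

Lemma in_dhat_comm (b1 b2 : R) : in_dhat b1 b2 = in_dhat b2 b1.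
Proof. unfold in_dhat; rewrite Rmin_comm; reflexivity. Qed.

Lemma root_pattern_ordered (f1 f2 : R -> R) (a1 a2 b1 b2 c1 c2 : R) :
  strongly_hyperbolic f1 -> strongly_hyperbolic f2 ->
  0 < a1 -> 0 < a2 -> b2 < b1 -> c1 <> c2 ->
  (exists x, in_dcheck b1 b2 x /\ fcheck f1 a1 a2 b1 b2 c1 c2 x = 0) ->
  root_pattern (fcheck f1 a1 a2 b1 b2 c1 c2) (in_dcheck b1 b2)
    (fhat f2 a1 a2 b1 b2 c1 c2) (in_dhat b1 b2).
Proof.
  intros Hf1 Hf2 Ha1 Ha2 Hb Hc [x0 [Hx0 Hroot]].
  assert (Hdc : in_dcheck b1 b2 = fun x => - b2 < x)
    by (unfold in_dcheck; rewrite Rmax_right; [reflexivity | lra]).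
  assert (Hdh : forall x, in_dhat b1 b2 x <-> - - b1 < - x)
    by (intros x; unfold in_dhat; rewrite Rmin_left by lra; split; lra).
  rewrite Hdc in Hx0 |- *; rewrite fcheck_shift_diff in Hroot |- *; rewrite fhat_shift_diff.
  assert (Hder2 : forall y, - - b1 < y ->
            ex_derive (fun y => shift_diff f2 a2 a1 (- b2) (- b1) y - (c2 - c1)) y)
    by (intros y Hy; apply shift_diff_level_ex_derive; auto; lra).
  destruct (Rtotal_order (c2 - c1) 0) as [Ht | [Ht | Ht]]; [| lra |].
  - right; right; split.
    + apply shift_diff_level_below_zero; auto.
    + apply (unique_crossing_root_reflect
               (fun y => shift_diff f2 a2 a1 (- b2) (- b1) y - (c2 - c1))
               (fun y => - - b1 < y)); [exact Hdh | exact Hder2 |].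
      apply shift_diff_level_below_zero; auto; lra.
  - assert (Ha : a2 < a1).
    { apply Rnot_le_lt; intros Hle.
      assert (shift_diff f1 a1 a2 b1 b2 x0 < 0) by (apply shift_diff_neg; auto).
      lra. }
    assert (Hnone : no_root (fun x => shift_diff f2 a2 a1 (- b2) (- b1) (- x) - (c2 - c1))
                      (in_dhat b1 b2)).
    { apply (no_root_reflect (fun y => shift_diff f2 a2 a1 (- b2) (- b1) y - (c2 - c1))
               (fun y => - - b1 < y)); [intros x Hx; apply Hdh, Hx |].
      intros y Hy; assert (shift_diff f2 a2 a1 (- b2) (- b1) y < 0)
        by (apply shift_diff_neg; auto; lra).
      lra. }
    destruct (shift_diff_level_above_zero f1 Hf1 a1 a2 b1 b2 Ha1 Ha2 Hb (c2 - c1) Ht)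
      as [Htwo | Htouch]; [exists x0; split; [exact Hx0 | lra] | left | right; left];
      split; assumption.
Qed.

Lemma root_pattern_fcheck_fhat (f1 f2 : R -> R) (a1 a2 b1 b2 c1 c2 : R) :
  strongly_hyperbolic f1 -> strongly_hyperbolic f2 ->
  0 < a1 -> 0 < a2 -> b1 <> b2 -> c1 <> c2 ->
  (exists x, in_dcheck b1 b2 x /\ fcheck f1 a1 a2 b1 b2 c1 c2 x = 0) ->
  root_pattern (fcheck f1 a1 a2 b1 b2 c1 c2) (in_dcheck b1 b2)
    (fhat f2 a1 a2 b1 b2 c1 c2) (in_dhat b1 b2).
Proof.
  intros Hf1 Hf2 Ha1 Ha2 Hb Hc Hroot.
  destruct (Rdichotomy _ _ Hb) as [Hlt | Hgt]; [| now apply root_pattern_ordered].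
  rewrite (fcheck_swap f1), (fhat_swap f2), in_dcheck_comm, in_dhat_comm.
  apply root_pattern_opp, root_pattern_ordered; auto.
  destruct Hroot as [x0 [Hx0 Hr0]]; exists x0.
  rewrite <- in_dcheck_comm; unfold fcheck in *; split; [exact Hx0 | lra].
Qed.

Lemma root_pattern_trichotomy (Fc : R -> R) (Dc : R -> Prop) (Fh : R -> R) (Dh : R -> Prop) :
  root_pattern Fc Dc Fh Dh ->
  let P1 := two_crossing_roots Fc Dc /\ no_root Fh Dh in
  let P2 := unique_touching_root Fc Dc /\ no_root Fh Dh in
  let P3 :=
    (exists x0 x1,
       Dc x0 /\ Fc x0 = 0 /\ (forall x, Dc x -> Fc x = 0 -> x = x0) /\
       changes_sign_at Fc x0 /\ Derive Fc x0 <> 0 /\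
       Dh x1 /\ Fh x1 = 0 /\ (forall x, Dh x -> Fh x = 0 -> x = x1) /\
       changes_sign_at Fh x1 /\ Derive Fh x1 <> 0) in
  (P1 /\ ~ P2 /\ ~ P3) \/ (~ P1 /\ P2 /\ ~ P3) \/ (~ P1 /\ ~ P2 /\ P3).
Proof.
  intros Hpat P1 P2 P3.
  assert (N12 : ~ (P1 /\ P2)).
  { intros [[(x0 & x1 & Hne & Hd0 & Hr0 & Hd1 & Hr1 & _) _] [(y & _ & _ & Huniq & _) _]].
    apply Hne; rewrite (Huniq x0 Hd0 Hr0), (Huniq x1 Hd1 Hr1); reflexivity. }
  assert (N13 : ~ (P1 /\ P3)).
  { intros [[(x0 & x1 & Hne & Hd0 & Hr0 & Hd1 & Hr1 & _) _] (y & _ & _ & _ & Huniq & _)].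
    apply Hne; rewrite (Huniq x0 Hd0 Hr0), (Huniq x1 Hd1 Hr1); reflexivity. }
  assert (N23 : ~ (P2 /\ P3)).
  { intros [[_ Hnone] (_ & z & _ & _ & _ & _ & _ & Hz & Hrz & _)]; exact (Hnone z Hz Hrz). }
  destruct Hpat as [H1 | [H2 | [(x0 & C0 & C1 & C2 & C3 & C4) (x1 & D0 & D1 & D2 & D3 & D4)]]].
  - left; split; [exact H1 | split; intros H; [apply N12 | apply N13]; split; assumption].
  - right; left; split; [intros H; apply N12; split; assumption|].
    split; [exact H2 | intros H; apply N23; split; assumption].
  - assert (H3 : P3) by (exists x0, x1; tauto).
    right; right; split; [intros H; apply N13; split; assumption|].
    split; [intros H; apply N23; split; assumption | exact H3].
Qed.

Theorem lemma3p7 (f1 f2 : R -> R) (a1 a2 b1 b2 c1 c2 : R) :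
  strongly_hyperbolic f1 -> strongly_hyperbolic f2 ->
  0 < a1 -> 0 < a2 -> b1 <> b2 -> c1 <> c2 ->
  (exists x, in_dcheck b1 b2 x /\ fcheck f1 a1 a2 b1 b2 c1 c2 x = 0) ->
  let fc := fcheck f1 a1 a2 b1 b2 c1 c2 in
  let fh := fhat f2 a1 a2 b1 b2 c1 c2 in
  let P1 :=
    (exists x0 x1, x0 <> x1 /\
       in_dcheck b1 b2 x0 /\ fc x0 = 0 /\ in_dcheck b1 b2 x1 /\ fc x1 = 0 /\
       (forall x, in_dcheck b1 b2 x -> fc x = 0 -> x = x0 \/ x = x1) /\
       changes_sign_at fc x0 /\ changes_sign_at fc x1 /\
       Derive fc x0 <> 0 /\ Derive fc x1 <> 0) /\
    (forall x, in_dhat b1 b2 x -> fh x <> 0) in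
  let P2 :=
    (exists x0,
       in_dcheck b1 b2 x0 /\ fc x0 = 0 /\
       (forall x, in_dcheck b1 b2 x -> fc x = 0 -> x = x0) /\
       keeps_sign_at fc x0 /\ Derive fc x0 = 0) /\
    (forall x, in_dhat b1 b2 x -> fh x <> 0) in
  let P3 :=
    (exists x0 x1,
       in_dcheck b1 b2 x0 /\ fc x0 = 0 /\
       (forall x, in_dcheck b1 b2 x -> fc x = 0 -> x = x0) /\
       changes_sign_at fc x0 /\ Derive fc x0 <> 0 /\
       in_dhat b1 b2 x1 /\ fh x1 = 0 /\
       (forall x, in_dhat b1 b2 x -> fh x = 0 -> x = x1) /\
       changes_sign_at fh x1 /\ Derive fh x1 <> 0) in
  (P1 /\ ~ P2 /\ ~ P3) \/ (~ P1 /\ P2 /\ ~ P3) \/ (~ P1 /\ ~ P2 /\ P3).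
Proof.
  intros Hf1 Hf2 Ha1 Ha2 Hb Hc Hroot fc fh.
  exact (root_pattern_trichotomy _ _ _ _
           (root_pattern_fcheck_fhat f1 f2 a1 a2 b1 b2 c1 c2 Hf1 Hf2 Ha1 Ha2 Hb Hc Hroot)).
Qed.
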